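(* Let $R$ be a compact Hausdorff topological semiring. If $\theta$ is an equivalence relation on $R$ that is open in $R\times R$, then there exists a congruence $\theta_0$ on $R$ that is open in $R\times R$ and satisfies $\theta_0\subseteq\theta$.
   Context: A semiring is an algebra $(R,+,\cdot,0)$ such that $(R,+,0)$ is a commutative monoid, $(R,\cdot)$ is a semigroup (no multiplicative identity is required), multiplication distributes over addition on both sides, and $0\cdot x = x\cdot 0 = 0$ for all $x\in R$. A topological semiring is a semiring with a topology in which addition and multiplication are continuous. A congruence on $R$ is an equivalence relation on $R$ that is a congruence for both the additive monoid and the multiplicative semigroup (equivalently, a subsemiring of $R\times R$). *)

From HB Require Import structures.
From mathcomp Require Import all_boot all_order all_algebra.
From mathcomp Require Import all_classical all_reals topology.
Set Implicit Arguments. Unset Strict Implicit. Unset Printing Implicit Defensive.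
Local Open Scope classical_set_scope.

Definition is_semiring (R : Type) (add mul : R -> R -> R) (zero : R) : Prop :=
  (forall x y z, add x (add y z) = add (add x y) z) /\
  (forall x y, add x y = add y x) /\
  (forall x, add zero x = x) /\
  (forall x y z, mul x (mul y z) = mul (mul x y) z) /\
  (forall x y z, mul x (add y z) = add (mul x y) (mul x z)) /\
  (forall x y z, mul (add x y) z = add (mul x z) (mul y z)) /\
  (forall x, mul zero x = zero /\ mul x zero = zero).

Definition is_topological_semiring (R : topologicalType)
    (add mul : R -> R -> R) (zero : R) : Prop :=
  [/\ is_semiring add mul zero,
      continuous (fun p : R * R => add p.1 p.2) &
      continuous (fun p : R * R => mul p.1 p.2)].

Definition is_equivalence (R : Type) (th : R -> R -> Prop) : Prop :=
  [/\ (forall x, th x x),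
      (forall x y, th x y -> th y x) &
      (forall x y z, th x y -> th y z -> th x z)].

Definition is_congruence (R : Type) (add mul : R -> R -> R)
    (th : R -> R -> Prop) : Prop :=
  [/\ is_equivalence th,
      (forall x y x' y', th x x' -> th y y' -> th (add x y) (add x' y')) &
      (forall x y x' y', th x x' -> th y y' -> th (mul x y) (mul x' y'))].

Definition rel_set (R : Type) (th : R -> R -> Prop) : set (R * R) :=
  [set p | th p.1 p.2].

From mathcomp Require Import all_boot all_order all_algebra.
From mathcomp Require Import all_classical all_reals topology.

(* Relate x and y when every translation t |-> a + b t c, a + b t, a + t c,
   a + t sends them to theta-related elements.  This relation lies in theta
   (take a = 0 and the plain translation), respects + because these maps are
   additive, and respects * because composing one of them with a
   multiplication gives another one.  It is open: if all translates of (x, y)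
   lie in the open set theta, the tube lemma over the compact parameter space
   R^3 keeps them there on a whole neighbourhood of (x, y). *)

Set Implicit Arguments.
Unset Strict Implicit.
Unset Printing Implicit Defensive.

Local Open Scope classical_set_scope.

Lemma open_forall_compact (K X Y : topologicalType) (G : K * X -> Y) (W : set Y) :
  compact [set: K] -> continuous G -> open W ->
  open [set x | forall k, W (G (k, x))].
Proof.
move=> cK cG oW; rewrite openE => x Wx.
have : \forall x' \near x, [set: K] `<=` (fun k => W (G (k, x'))).
  apply: ((compact_near_coveringP _).1 cK X (nbhs x) (fun x' k => W (G (k, x')))).
  move=> k _; have : nbhs (k, x) (G @^-1` W).
    by apply: cG; apply: open_nbhs_nbhs; split.
  by apply: filterS => -[].
by apply: filterS => x' Wx' k; apply: Wx'.
Qed.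

Lemma open_forall_bool (T : topologicalType) (P : bool -> set T) :
  (forall b, open (P b)) -> open [set x | forall b, P b x].
Proof.
move=> oP; have -> : [set x | forall b, P b x] = P true `&` P false.
  by apply/seteqP; split => [x Px | x [Pt Pf] []] //; split.
exact: openI.
Qed.

Lemma continuous_binop (T X Y Z : topologicalType) (op : X -> Y -> Z)
    (f : T -> X) (g : T -> Y) :
  continuous (fun p : X * Y => op p.1 p.2) -> continuous f -> continuous g ->
  continuous (fun t => op (f t) (g t)).
Proof.
move=> cop cf cg t.
apply: (@continuous_comp _ _ _ (fun t => (f t, g t)) (fun p => op p.1 p.2)).
  exact: cvg_pair (cf t) (cg t).
exact: cop.
Qed.

Lemma open_forall_compact_rel (K X Y : topologicalType) (f : K -> X -> Y)
    (W : set (Y * Y)) :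
  compact [set: K] -> continuous (fun q : K * X => f q.1 q.2) -> open W ->
  open [set p : X * X | forall k, W (f k p.1, f k p.2)].
Proof.
move=> cK cf oW.
apply: (@open_forall_compact _ _ _ (fun q => (f q.1 q.2.1, f q.1 q.2.2))) => //.
have cfst : continuous (fun q : K * (X * X) => (q.1, q.2.1)).
  by move=> q; apply: cvg_pair; [exact: cvg_fst | apply: cvg_comp cvg_snd cvg_fst].
have csnd : continuous (fun q : K * (X * X) => (q.1, q.2.2)).
  by move=> q; apply: cvg_pair; [exact: cvg_fst | apply: cvg_comp cvg_snd cvg_snd].
move=> q; apply: cvg_pair.
  exact: (continuous_comp (cfst q) (cf _)).
exact: (continuous_comp (csnd q) (cf _)).
Qed.

Lemma congruence_of_compat (T : Type) (add mul : T -> T -> T) (th : T -> T -> Prop) :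
  is_equivalence th ->
  (forall x x' y, th x x' -> th (add x y) (add x' y)) ->
  (forall x x' y, th x x' -> th (add y x) (add y x')) ->
  (forall x x' y, th x x' -> th (mul x y) (mul x' y)) ->
  (forall x x' y, th x x' -> th (mul y x) (mul y x')) ->
  is_congruence add mul th.
Proof.
move=> eqth addr addl mulr mull; split => // x y x' y' hx hy; case: eqth => _ _ trans.
  by apply: (trans _ (add x' y)); [apply: addr | apply: addl].
by apply: (trans _ (mul x' y)); [apply: mulr | apply: mull].
Qed.

Section TranslationCore.
Variables (R : Type) (add mul : R -> R -> R) (zero : R).
Hypothesis semiringR : is_semiring add mul zero.

(* [b] x [c] with optional factors; R need not have a unit. *)
Definition mul_lr (l r : bool) (b c x : R) : R :=
  let xc := if r then mul x c else x in if l then mul b xc else xc.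

Definition translation_core (theta : R -> R -> Prop) (x y : R) : Prop :=
  forall l r a b c, theta (add a (mul_lr l r b c x)) (add a (mul_lr l r b c y)).

Lemma mul_lrD l r b c x y :
  mul_lr l r b c (add x y) = add (mul_lr l r b c x) (mul_lr l r b c y).
Proof.
case: semiringR => _ [_ [_ [_ [mulDr [mulDl _]]]]].
by case: l; case: r; rewrite /mul_lr ?mulDl ?mulDr.
Qed.

Lemma mul_lr_mulr l r b c x y :
  mul_lr l r b c (mul x y) = mul_lr l true b (if r then mul y c else y) x.
Proof.
case: semiringR => _ [_ [_ [mulA _]]].
by case: r; rewrite /mul_lr ?mulA.
Qed.

Lemma mul_lr_mull l r b c x y :
  mul_lr l r b c (mul y x) = mul_lr true r (if l then mul b y else y) c x.
Proof.
case: semiringR => _ [_ [_ [mulA _]]].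
by case: l; case: r; rewrite /mul_lr ?mulA.
Qed.

Variable theta : R -> R -> Prop.
Hypothesis eq_theta : is_equivalence theta.

Lemma translation_core_equivalence : is_equivalence (translation_core theta).
Proof.
case: eq_theta => refl sym trans; split.
- by move=> x l r a b c.
- by move=> x y hxy l r a b c; apply: sym.
- by move=> x y z hxy hyz l r a b c; apply: trans (hxy l r a b c) (hyz l r a b c).
Qed.

Lemma translation_core_sub x y : translation_core theta x y -> theta x y.
Proof.
case: semiringR => _ [_ [add0r _]].
by move=> /(_ false false zero zero zero); rewrite /mul_lr !add0r.
Qed.

Lemma translation_core_addr x x' y :
  translation_core theta x x' -> translation_core theta (add x y) (add x' y).
Proof.
case: semiringR => addA [addC _] hx l r a b c.
have shift u : add a (add u (mul_lr l r b c y)) = add (add a (mul_lr l r b c y)) u.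
  by rewrite [add u _]addC addA.
by rewrite !mul_lrD !shift; apply: hx.
Qed.

Lemma translation_core_mulr x x' y :
  translation_core theta x x' -> translation_core theta (mul x y) (mul x' y).
Proof. by move=> hx l r a b c; rewrite !mul_lr_mulr; apply: hx. Qed.

Lemma translation_core_mull x x' y :
  translation_core theta x x' -> translation_core theta (mul y x) (mul y x').
Proof. by move=> hx l r a b c; rewrite !mul_lr_mull; apply: hx. Qed.

Lemma translation_core_congruence : is_congruence add mul (translation_core theta).
Proof.
case: semiringR => _ [addC _].
apply: congruence_of_compat.
- exact: translation_core_equivalence.
- exact: translation_core_addr.
- by move=> x x' y hx; rewrite ![add y _]addC; apply: translation_core_addr.
- exact: translation_core_mulr.
- exact: translation_core_mull.
Qed.

End TranslationCore.

Lemma continuous_mul_lr (T R : topologicalType) (mul : R -> R -> R) l r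
    (b c x : T -> R) :
  continuous (fun p : R * R => mul p.1 p.2) ->
  continuous b -> continuous c -> continuous x ->
  continuous (fun t => mul_lr mul l r (b t) (c t) (x t)).
Proof.
move=> cmul cb cc cx; rewrite /mul_lr.
have cxc : continuous (fun t => if r then mul (x t) (c t) else x t).
  by case: r => //; apply: continuous_binop.
by case: l => //; apply: continuous_binop.
Qed.

Lemma compact_setT3 (R : topologicalType) :
  compact [set: R] -> compact [set: R * (R * R)].
Proof.
move=> cR; rewrite -setXTT; apply: compact_setX => //.
by rewrite -setXTT; apply: compact_setX.
Qed.

Lemma open_translation_core (R : topologicalType) (add mul : R -> R -> R)
    (zero : R) (theta : R -> R -> Prop) :
  is_topological_semiring add mul zero -> compact [set: R] ->
  open (rel_set theta) -> open (rel_set (translation_core add mul theta)).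
Proof.
case=> _ cadd cmul cR otheta.
pose f l r (k : R * (R * R)) x := add k.1 (mul_lr mul l r k.2.1 k.2.2 x).
have -> : rel_set (translation_core add mul theta) =
    [set p | forall l r k, rel_set theta (f l r k p.1, f l r k p.2)].
  apply/seteqP; split => [p hp l r k | p hp l r a b c]; first exact: hp.
  exact: (hp l r (a, (b, c))).
apply: open_forall_bool => l; apply: open_forall_bool => r.
apply: open_forall_compact_rel => //; first exact: compact_setT3.
have proj1 : continuous (fun q : R * (R * R) * R => q.1.1).
  by move=> q; apply: cvg_comp cvg_fst cvg_fst.
have proj2 : continuous (fun q : R * (R * R) * R => q.1.2.1).
  move=> q; apply: (@continuous_comp _ _ _ fst (fun k : R * (R * R) => k.2.1)).
    exact: cvg_fst.
  exact: cvg_comp cvg_snd cvg_fst.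
have proj3 : continuous (fun q : R * (R * R) * R => q.1.2.2).
  move=> q; apply: (@continuous_comp _ _ _ fst (fun k : R * (R * R) => k.2.2)).
    exact: cvg_fst.
  exact: cvg_comp cvg_snd cvg_snd.
have proj4 : continuous (fun q : R * (R * R) * R => q.2).
  by move=> q; apply: cvg_snd.
by rewrite /f; apply: continuous_binop => //; apply: continuous_mul_lr.
Qed.

Theorem lemma4p5 (R : topologicalType) (add mul : R -> R -> R) (zero : R)
  (hR : is_topological_semiring add mul zero)
  (hcpt : compact [set: R]%classic) (hT2 : hausdorff_space R)
  (theta : R -> R -> Prop)
  (htheta : is_equivalence theta) (hopen : open (rel_set theta)) :
  exists theta0 : R -> R -> Prop,
    [/\ is_congruence add mul theta0, open (rel_set theta0) &
        (forall x y, theta0 x y -> theta x y)].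
Proof.
have [semiringR _ _] := hR.
exists (translation_core add mul theta); split.
- exact (translation_core_congruence semiringR htheta).
- exact: open_translation_core hR hcpt hopen.
- exact: translation_core_sub semiringR theta.
Qed.
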